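(* For each $n\ge1$ let $V_n\gamma$ be the functor from the category of double categories and double functors to $\mathbf{Cat}$ sending $C$ to $V^{\gamma C}_n$ and $F$ to the restriction of $(\gamma F)_1$ to $V^{\gamma C}_n$, and for $m\le n$ let $\eta_{m,n}:V_m\gamma\Rightarrow V_n\gamma$ be the natural transformation given by the inclusions $V^{\gamma C}_m\subseteq V^{\gamma C}_n$. Then the functor $\gamma_1=\pi_1\gamma$, sending $C$ to the morphism category $(\gamma C)_1$ and $F$ to $(\gamma F)_1$, is the colimit $\varinjlim_n V_n\gamma$ of this diagram (with the inclusions $V^{\gamma C}_n\subseteq(\gamma C)_1$ as colimit cocone).
   Context: Double categories and double functors are not assumed strict. $C_0$: objects and vertical morphisms; $C_1$: horizontal morphisms and 2-morphisms. A 2-morphism is globular if its source and target are identity vertical morphisms; unitor/associator components are globular. The globularily generated piece $\gamma C$ is the smallest sub-double category of $C$ containing all objects, vertical morphisms, horizontal morphisms and globular 2-morphisms of $C$; for a double functor $F:C\to D$, $\gamma F:\gamma C\to\gamma D$ is its restriction. For a double category $E$: $H^E_1$ is the collection of globular 2-morphisms and horizontal identities of vertical morphisms; $V^E_1$ is the subcategory of $E_1$ generated by $H^E_1$ under vertical composition; for $n>1$, $H^E_n$ is the collection of all horizontal composites (any parenthesization) of composable finite sequences of morphisms of $V^E_{n-1}$, and $V^E_n$ is the subcategory of $E_1$ generated by $H^E_n$. The morphism projection $\pi_1$ sends a double category to its morphism category $C_1$ and a double functor to its morphism functor $F_1$. Double functors between globularily generated double categories map $V^C_n$ into $V^D_n$.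 *)

From Stdlib Require Import Arith ClassicalEpsilon ProofIrrelevance.

Record Cat := mkCat {
  ob : Type; mor : Type;
  dom : mor -> ob; cod : mor -> ob;
  idm : ob -> mor;
  comp : mor -> mor -> mor;            (* comp g f = g o f, meaningful when cod f = dom g *)
  dom_idm : forall a, dom (idm a) = a;
  cod_idm : forall a, cod (idm a) = a;
  dom_comp : forall g f, cod f = dom g -> dom (comp g f) = dom f;
  cod_comp : forall g f, cod f = dom g -> cod (comp g f) = cod g;
  comp_idl : forall f, comp (idm (cod f)) f = f;
  comp_idr : forall f, comp f (idm (dom f)) = f;
  comp_assoc : forall h g f, cod f = dom g -> cod g = dom h ->
      comp h (comp g f) = comp (comp h g) f }.
Arguments dom {_} _. Arguments cod {_} _. Arguments idm {_} _. Arguments comp {_} _ _.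

Record Functor (A B : Cat) := mkFunctor {
  fob : ob A -> ob B; fmor : mor A -> mor B;
  fdom : forall f, dom (fmor f) = fob (dom f);
  fcod : forall f, cod (fmor f) = fob (cod f);
  fidm : forall a, fmor (idm a) = idm (fob a);
  fcomp_ax : forall g f, cod f = dom g -> fmor (comp g f) = comp (fmor g) (fmor f) }.
Arguments fob {_ _} _ _. Arguments fmor {_ _} _ _.

Definition Fid (A : Cat) : Functor A A.
Proof.
  refine (mkFunctor A A (fun a => a) (fun f => f) _ _ _ _); reflexivity.
Defined.

Definition Fcomp {A B C : Cat} (G : Functor B C) (F : Functor A B) : Functor A C.
Proof.
  refine (mkFunctor A C (fun a => fob G (fob F a)) (fun f => fmor G (fmor F f)) _ _ _ _).
  - intro f; now rewrite fdom, fdom.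
  - intro f; now rewrite fcod, fcod.
  - intro a; now rewrite fidm, fidm.
  - intros g f e. rewrite fcomp_ax by exact e. apply fcomp_ax.
    now rewrite fcod, fdom, e.
Defined.

Definition feq {A B : Cat} (F G : Functor A B) : Prop :=
  (forall a, fob F a = fob G a) /\ (forall f, fmor F f = fmor G f).

Definition is_iso (A : Cat) (f : mor A) : Prop :=
  exists g, dom g = cod f /\ cod g = dom f /\ comp g f = idm (dom f) /\ comp f g = idm (cod f).

Definition is_identity (A : Cat) (f : mor A) : Prop := f = idm (dom f).

Section Sub.
Variables (A : Cat) (P : mor A -> Prop)
  (hid : forall a, P (idm a))
  (hc : forall g f, cod f = dom g -> P f -> P g -> P (comp g f)).

Definition sub_comp (g f : {m | P m}) : {m | P m} :=
  match excluded_middle_informative (cod (proj1_sig f) = dom (proj1_sig g)) with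
  | left e => exist _ (comp (proj1_sig g) (proj1_sig f)) (hc _ _ e (proj2_sig f) (proj2_sig g))
  | right _ => f
  end.

Lemma sub_comp_eq g f : cod (proj1_sig f) = dom (proj1_sig g) ->
  proj1_sig (sub_comp g f) = comp (proj1_sig g) (proj1_sig f).
Proof.
  intro e; unfold sub_comp; destruct excluded_middle_informative; [reflexivity|contradiction].
Qed.

Lemma sub_eq (x y : {m | P m}) : proj1_sig x = proj1_sig y -> x = y.
Proof.
  destruct x as [x px], y as [y py]; simpl; intros ->; f_equal; apply proof_irrelevance.
Qed.

Definition Sub : Cat.
Proof.
  refine (mkCat (ob A) {m | P m} (fun f => dom (proj1_sig f)) (fun f => cod (proj1_sig f))
            (fun a => exist _ (idm a) (hid a)) sub_comp _ _ _ _ _ _ _).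
  - intro a; apply dom_idm.
  - intro a; apply cod_idm.
  - intros g f e; rewrite sub_comp_eq by exact e; now apply dom_comp.
  - intros g f e; rewrite sub_comp_eq by exact e; now apply cod_comp.
  - intro f; apply sub_eq; rewrite sub_comp_eq; simpl.
    + apply comp_idl.
    + now rewrite dom_idm.
  - intro f; apply sub_eq; rewrite sub_comp_eq; simpl.
    + apply comp_idr.
    + now rewrite cod_idm.
  - intros h g f e1 e2; apply sub_eq.
    rewrite sub_comp_eq, sub_comp_eq, sub_comp_eq, sub_comp_eq; auto.
    + now apply comp_assoc.
    + rewrite sub_comp_eq by exact e2; now rewrite dom_comp.
    + rewrite sub_comp_eq by exact e1; now rewrite cod_comp.
Defined.
End Sub.

(* C0 : objects and vertical morphisms; C1 : horizontal morphisms and 2-morphisms.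
   hco x y / hcm a b : horizontal composite "x then y" (defined when T x = S y). *)
Record DblCat := mkDbl {
  C0 : Cat; C1 : Cat;
  Sf : Functor C1 C0; Tf : Functor C1 C0; Uf : Functor C0 C1;
  SU_ob : forall a, fob Sf (fob Uf a) = a;
  SU_mor : forall v, fmor Sf (fmor Uf v) = v;
  TU_ob : forall a, fob Tf (fob Uf a) = a;
  TU_mor : forall v, fmor Tf (fmor Uf v) = v;
  hco : ob C1 -> ob C1 -> ob C1;
  hcm : mor C1 -> mor C1 -> mor C1;
  hco_S : forall x y, fob Tf x = fob Sf y -> fob Sf (hco x y) = fob Sf x;
  hco_T : forall x y, fob Tf x = fob Sf y -> fob Tf (hco x y) = fob Tf y;
  hcm_dom : forall a b, fmor Tf a = fmor Sf b -> dom (hcm a b) = hco (dom a) (dom b);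
  hcm_cod : forall a b, fmor Tf a = fmor Sf b -> cod (hcm a b) = hco (cod a) (cod b);
  hcm_S : forall a b, fmor Tf a = fmor Sf b -> fmor Sf (hcm a b) = fmor Sf a;
  hcm_T : forall a b, fmor Tf a = fmor Sf b -> fmor Tf (hcm a b) = fmor Tf b;
  hcm_id : forall x y, fob Tf x = fob Sf y -> hcm (idm x) (idm y) = idm (hco x y);
  hcm_comp : forall a a' b b', cod a = dom a' -> cod b = dom b' ->
      fmor Tf a = fmor Sf b -> fmor Tf a' = fmor Sf b' ->
      hcm (comp a' a) (comp b' b) = comp (hcm a' b') (hcm a b);
  assoc : ob C1 -> ob C1 -> ob C1 -> mor C1;
  assoc_dom : forall x y z, fob Tf x = fob Sf y -> fob Tf y = fob Sf z ->
      dom (assoc x y z) = hco (hco x y) z;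
  assoc_cod : forall x y z, fob Tf x = fob Sf y -> fob Tf y = fob Sf z ->
      cod (assoc x y z) = hco x (hco y z);
  assoc_glob : forall x y z, fob Tf x = fob Sf y -> fob Tf y = fob Sf z ->
      is_identity C0 (fmor Sf (assoc x y z)) /\ is_identity C0 (fmor Tf (assoc x y z));
  assoc_iso : forall x y z, fob Tf x = fob Sf y -> fob Tf y = fob Sf z ->
      is_iso C1 (assoc x y z);
  assoc_nat : forall a b c, fmor Tf a = fmor Sf b -> fmor Tf b = fmor Sf c ->
      comp (hcm a (hcm b c)) (assoc (dom a) (dom b) (dom c))
      = comp (assoc (cod a) (cod b) (cod c)) (hcm (hcm a b) c);
  lunit : ob C1 -> mor C1;
  lunit_dom : forall x, dom (lunit x) = hco (fob Uf (fob Sf x)) x;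
  lunit_cod : forall x, cod (lunit x) = x;
  lunit_glob : forall x, is_identity C0 (fmor Sf (lunit x)) /\ is_identity C0 (fmor Tf (lunit x));
  lunit_iso : forall x, is_iso C1 (lunit x);
  lunit_nat : forall a,
      comp a (lunit (dom a)) = comp (lunit (cod a)) (hcm (fmor Uf (fmor Sf a)) a);
  runit : ob C1 -> mor C1;
  runit_dom : forall x, dom (runit x) = hco x (fob Uf (fob Tf x));
  runit_cod : forall x, cod (runit x) = x;
  runit_glob : forall x, is_identity C0 (fmor Sf (runit x)) /\ is_identity C0 (fmor Tf (runit x));
  runit_iso : forall x, is_iso C1 (runit x);
  runit_nat : forall a,
      comp a (runit (dom a)) = comp (runit (cod a)) (hcm a (fmor Uf (fmor Tf a)));
  pentagon : forall w x y z, fob Tf w = fob Sf x -> fob Tf x = fob Sf y -> fob Tf y = fob Sf z ->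
      comp (assoc w x (hco y z)) (assoc (hco w x) y z)
      = comp (hcm (idm w) (assoc x y z))
             (comp (assoc w (hco x y) z) (hcm (assoc w x y) (idm z)));
  triangle : forall x y, fob Tf x = fob Sf y ->
      comp (hcm (idm x) (lunit y)) (assoc x (fob Uf (fob Tf x)) y) = hcm (runit x) (idm y)
}.
Arguments Sf {_}. Arguments Tf {_}. Arguments Uf {_}.
Arguments hco {_} _ _. Arguments hcm {_} _ _. Arguments assoc {_} _ _ _.
Arguments lunit {_} _. Arguments runit {_} _.

Record DFun (C D : DblCat) := mkDFun {
  F0 : Functor (C0 C) (C0 D);
  F1 : Functor (C1 C) (C1 D);
  phi : ob (C1 C) -> ob (C1 C) -> mor (C1 D);     (* F x . F y => F (x . y) *)
  phiU : ob (C0 C) -> mor (C1 D)                  (* U (F a) => F (U a) *)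
}.
Arguments F0 {_ _} _. Arguments F1 {_ _} _. Arguments phi {_ _} _ _ _. Arguments phiU {_ _} _ _.

Definition globular (C : DblCat) (a : mor (C1 C)) : Prop :=
  is_identity (C0 C) (fmor Sf a) /\ is_identity (C0 C) (fmor Tf a).

Record IsDblFunctor {C D : DblCat} (F : DFun C D) : Prop := {
  dS_ob : forall x, fob Sf (fob (F1 F) x) = fob (F0 F) (fob Sf x);
  dS_mor : forall a, fmor Sf (fmor (F1 F) a) = fmor (F0 F) (fmor Sf a);
  dT_ob : forall x, fob Tf (fob (F1 F) x) = fob (F0 F) (fob Tf x);
  dT_mor : forall a, fmor Tf (fmor (F1 F) a) = fmor (F0 F) (fmor Tf a);
  phi_dom : forall x y, fob Tf x = fob Sf y ->
      dom (phi F x y) = hco (fob (F1 F) x) (fob (F1 F) y);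
  phi_cod : forall x y, fob Tf x = fob Sf y -> cod (phi F x y) = fob (F1 F) (hco x y);
  phi_glob : forall x y, fob Tf x = fob Sf y -> globular D (phi F x y);
  phi_iso : forall x y, fob Tf x = fob Sf y -> is_iso (C1 D) (phi F x y);
  phi_nat : forall a b, fmor Tf a = fmor Sf b ->
      comp (fmor (F1 F) (hcm a b)) (phi F (dom a) (dom b))
      = comp (phi F (cod a) (cod b)) (hcm (fmor (F1 F) a) (fmor (F1 F) b));
  phiU_dom : forall a, dom (phiU F a) = fob Uf (fob (F0 F) a);
  phiU_cod : forall a, cod (phiU F a) = fob (F1 F) (fob Uf a);
  phiU_glob : forall a, globular D (phiU F a);
  phiU_iso : forall a, is_iso (C1 D) (phiU F a);
  phiU_nat : forall v,
      comp (fmor (F1 F) (fmor Uf v)) (phiU F (dom v))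
      = comp (phiU F (cod v)) (fmor Uf (fmor (F0 F) v));
  coh_assoc : forall x y z, fob Tf x = fob Sf y -> fob Tf y = fob Sf z ->
      comp (fmor (F1 F) (assoc x y z))
           (comp (phi F (hco x y) z) (hcm (phi F x y) (idm (fob (F1 F) z))))
      = comp (phi F x (hco y z))
           (comp (hcm (idm (fob (F1 F) x)) (phi F y z))
                 (assoc (fob (F1 F) x) (fob (F1 F) y) (fob (F1 F) z)));
  coh_lunit : forall x,
      comp (fmor (F1 F) (lunit x))
           (comp (phi F (fob Uf (fob Sf x)) x) (hcm (phiU F (fob Sf x)) (idm (fob (F1 F) x))))
      = lunit (fob (F1 F) x);
  coh_runit : forall x,
      comp (fmor (F1 F) (runit x))
           (comp (phi F x (fob Uf (fob Tf x))) (hcm (idm (fob (F1 F) x)) (phiU F (fob Tf x))))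
      = runit (fob (F1 F) x)
}.

Definition dfid (C : DblCat) : DFun C C :=
  mkDFun C C (Fid _) (Fid _) (fun x y => idm (hco x y)) (fun a => idm (fob Uf a)).

Definition dfcomp {C D E : DblCat} (G : DFun D E) (F : DFun C D) : DFun C E :=
  mkDFun C E (Fcomp (F0 G) (F0 F)) (Fcomp (F1 G) (F1 F))
    (fun x y => comp (fmor (F1 G) (phi F x y)) (phi G (fob (F1 F) x) (fob (F1 F) y)))
    (fun a => comp (fmor (F1 G) (phiU F a)) (phiU G (fob (F0 F) a))).

Record DblToCat := mkDblToCat {
  Gob : DblCat -> Cat;
  Gmor : forall (C D : DblCat) (F : DFun C D), IsDblFunctor F -> Functor (Gob C) (Gob D);
  Gmor_id : forall C (p : IsDblFunctor (dfid C)), feq (Gmor C C (dfid C) p) (Fid (Gob C));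
  Gmor_comp : forall C D E (F : DFun C D) (H : DFun D E) pF pH pHF,
      feq (Gmor C E (dfcomp H F) pHF) (Fcomp (Gmor D E H pH) (Gmor C D F pF))
}.
Arguments Gmor _ {_ _} _ _.

Inductive gen (A : Cat) (P : mor A -> Prop) : mor A -> Prop :=
| gen_base : forall f, P f -> gen A P f
| gen_id : forall a, gen A P (idm a)
| gen_comp : forall g f, cod f = dom g -> gen A P f -> gen A P g -> gen A P (comp g f).

(* horizontal composites (any parenthesization) of nonempty composable
   finite sequences of 2-morphisms satisfying P *)
Inductive hcl (C : DblCat) (P : mor (C1 C) -> Prop) : mor (C1 C) -> Prop :=
| hcl_base : forall a, P a -> hcl C P a
| hcl_comp : forall a b, fmor Tf a = fmor Sf b -> hcl C P a -> hcl C P b -> hcl C P (hcm a b).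

(* 2-morphisms of the globularily generated piece gamma C (smallest sub-double
   category containing all objects, vertical and horizontal morphisms, and
   globular 2-morphisms) *)
Inductive gam (C : DblCat) : mor (C1 C) -> Prop :=
| gam_glob : forall a, globular C a -> gam C a
| gam_U : forall v, gam C (fmor Uf v)
| gam_id : forall x, gam C (idm x)
| gam_vcomp : forall b a, cod a = dom b -> gam C a -> gam C b -> gam C (comp b a)
| gam_hcomp : forall a b, fmor Tf a = fmor Sf b -> gam C a -> gam C b -> gam C (hcm a b).

Definition H1 (C : DblCat) (a : mor (C1 C)) : Prop :=
  globular C a \/ exists v, a = fmor Uf v.

(* Vn C n = V_n (n >= 1; the value at n = 0 is an unused dummy equal to V_1) *)
Fixpoint Vn (C : DblCat) (n : nat) : mor (C1 C) -> Prop :=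
  match n with
  | 0 => gen (C1 C) (H1 C)
  | S k => match k with
           | 0 => gen (C1 C) (H1 C)
           | S _ => gen (C1 C) (hcl C (Vn C k))
           end
  end.

Lemma Vn_id C n a : Vn C n (idm a).
Proof. destruct n as [|[|k]]; apply gen_id. Qed.

Lemma Vn_comp C n g f : cod f = dom g -> Vn C n f -> Vn C n g -> Vn C n (comp g f).
Proof. destruct n as [|[|k]]; simpl; intros; now apply gen_comp. Qed.

Definition SV (C : DblCat) (n : nat) : Cat := Sub (C1 C) (Vn C n) (Vn_id C n) (Vn_comp C n).
Definition Sg (C : DblCat) : Cat :=
  Sub (C1 C) (gam C) (gam_id C) (fun g f e hf hg => gam_vcomp C g f e hf hg).

(* lamn : V_n gamma => G is natural (V_n gamma acts on F by restricting F_1;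
   stated for all membership proofs, well-definedness is proved separately) *)
Definition NatV (G : DblToCat) (n : nat) (lamn : forall C, Functor (SV C n) (Gob G C)) : Prop :=
  forall (C D : DblCat) (F : DFun C D) (pF : IsDblFunctor F),
    (forall x : ob (C1 C), fob (Gmor G F pF) (fob (lamn C) x) = fob (lamn D) (fob (F1 F) x)) /\
    (forall a (h : Vn C n a) (h' : Vn D n (fmor (F1 F) a)),
       fmor (Gmor G F pF) (fmor (lamn C) (exist _ a h))
       = fmor (lamn D) (exist _ (fmor (F1 F) a) h')).

Definition NatG (G : DblToCat) (mu : forall C, Functor (Sg C) (Gob G C)) : Prop :=
  forall (C D : DblCat) (F : DFun C D) (pF : IsDblFunctor F),
    (forall x : ob (C1 C), fob (Gmor G F pF) (fob (mu C) x) = fob (mu D) (fob (F1 F) x)) /\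
    (forall a (h : gam C a) (h' : gam D (fmor (F1 F) a)),
       fmor (Gmor G F pF) (fmor (mu C) (exist _ a h))
       = fmor (mu D) (exist _ (fmor (F1 F) a) h')).

Definition Cocone (G : DblToCat) (lam : forall n C, Functor (SV C n) (Gob G C)) : Prop :=
  (forall n, 1 <= n -> NatV G n (lam n)) /\
  (forall m n, 1 <= m -> m <= n -> forall C : DblCat,
     (forall x : ob (C1 C), fob (lam m C) x = fob (lam n C) x) /\
     (forall a (h : Vn C m a) (h' : Vn C n a),
        fmor (lam m C) (exist _ a h) = fmor (lam n C) (exist _ a h'))).

Definition Factors (G : DblToCat) (lam : forall n C, Functor (SV C n) (Gob G C))
  (mu : forall C, Functor (Sg C) (Gob G C)) : Prop :=
  forall n, 1 <= n -> forall C : DblCat,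
    (forall x : ob (C1 C), fob (mu C) x = fob (lam n C) x) /\
    (forall a (h : Vn C n a) (h' : gam C a),
       fmor (mu C) (exist _ a h') = fmor (lam n C) (exist _ a h)).

(* A double functor F sends a horizontal composite a.b to F a . F b conjugated
   by the globular comparison isomorphisms phi, and a horizontal identity U v to
   U (F v) conjugated by phiU.  Composites q o h o p with q and p globular are
   closed under horizontal composition by the interchange law, so F maps each
   V_n into V_n and gamma C into gamma D.  The V_n increase and exhaust the
   2-morphisms of gamma C, so a compatible family of functors on the V_n glues
   to a unique functor on (gamma C)_1, whose naturality is inherited from the
   family. *)

From Stdlib Require Import Arith Lia ClassicalEpsilon.

Ltac solve_composable :=
  repeat first [ rewrite dom_comp by solve_composable
               | rewrite cod_comp by solve_composable ];
  congruence.

Lemma is_identity_idm (A : Cat) a : is_identity A (idm a).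
Proof. unfold is_identity; now rewrite dom_idm. Qed.

Lemma is_identity_dom_cod (A : Cat) u : is_identity A u -> dom u = cod u.
Proof. intro H; rewrite H, dom_idm, cod_idm; reflexivity. Qed.

Lemma is_identity_eq (A : Cat) u v :
  is_identity A u -> is_identity A v -> dom u = dom v -> u = v.
Proof. intros Hu Hv e; rewrite Hu, Hv, e; reflexivity. Qed.

Lemma comp_identity_l (A : Cat) u f : is_identity A u -> dom u = cod f -> comp u f = f.
Proof. intros H e; rewrite H, e; apply comp_idl. Qed.

Lemma comp_identity_r (A : Cat) u f : is_identity A u -> cod u = dom f -> comp f u = f.
Proof. intros H e; rewrite H, (is_identity_dom_cod A u H), e; apply comp_idr. Qed.

Lemma is_identity_comp (A : Cat) g f :
  is_identity A g -> is_identity A f -> cod f = dom g -> is_identity A (comp g f).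
Proof. intros Hg Hf e; rewrite comp_identity_l; auto. Qed.

Lemma is_identity_fmor {A B : Cat} (F : Functor A B) u :
  is_identity A u -> is_identity B (fmor F u).
Proof. unfold is_identity; intro H; rewrite H, fidm, dom_idm; reflexivity. Qed.

Lemma fmor_comp_identity_l {A B : Cat} (F : Functor A B) q h :
  is_identity B (fmor F q) -> cod h = dom q -> fmor F (comp q h) = fmor F h.
Proof.
  intros Hq e; rewrite fcomp_ax by exact e.
  apply comp_identity_l; auto; rewrite fdom, fcod; congruence.
Qed.

Lemma fmor_comp_identity_r {A B : Cat} (F : Functor A B) h p :
  is_identity B (fmor F p) -> cod p = dom h -> fmor F (comp h p) = fmor F h.
Proof.
  intros Hp e; rewrite fcomp_ax by exact e.
  apply comp_identity_r; auto; rewrite fdom, fcod; congruence.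
Qed.

Lemma comp_section_transpose (A : Cat) (X f Y g : mor A) :
  comp X f = Y -> cod f = dom X -> comp f g = idm (cod f) -> cod g = dom f ->
  X = comp Y g.
Proof.
  intros <- e1 e2 e3; rewrite <- comp_assoc by auto.
  rewrite e2, e1; symmetry; apply comp_idr.
Qed.

Lemma globular_idm (C : DblCat) x : globular C (idm x).
Proof. split; rewrite fidm; apply is_identity_idm. Qed.

Lemma globular_comp (C : DblCat) g f :
  globular C g -> globular C f -> cod f = dom g -> globular C (comp g f).
Proof.
  intros [Hg1 Hg2] [Hf1 Hf2] e.
  split; rewrite fcomp_ax by exact e; apply is_identity_comp; auto;
    rewrite fcod, fdom; congruence.
Qed.

Lemma globular_hcm (C : DblCat) a b :
  globular C a -> globular C b -> fmor Tf a = fmor Sf b -> globular C (hcm a b).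
Proof. intros [Ha _] [_ Hb] e; split; [rewrite hcm_S | rewrite hcm_T]; auto. Qed.

Lemma globular_left_inverse (C : DblCat) f g :
  globular C f -> cod f = dom g -> comp g f = idm (dom f) -> globular C g.
Proof.
  intros [Hf1 Hf2] e E.
  assert (Hinv : forall Fu : Functor (C1 C) (C0 C),
            is_identity _ (fmor Fu f) -> is_identity _ (fmor Fu g)).
  { intros Fu Hf. apply (f_equal (fmor Fu)) in E.
    rewrite fmor_comp_identity_r, fidm in E by auto.
    rewrite E; apply is_identity_idm. }
  split; auto.
Qed.

Lemma globular_fmor {C D : DblCat} (F : DFun C D) (pF : IsDblFunctor F) a :
  globular C a -> globular D (fmor (F1 F) a).
Proof.
  intros [H1 H2]; split; [rewrite (dS_mor F pF) | rewrite (dT_mor F pF)];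
    now apply is_identity_fmor.
Qed.

Section Sandwich.
Variable D : DblCat.
Implicit Types P Q : mor (C1 D) -> Prop.

Definition sandwich P (x : mor (C1 D)) : Prop :=
  exists q h p, globular D q /\ globular D p /\ P h /\ cod p = dom h /\ cod h = dom q /\
    x = comp q (comp h p).

Lemma sandwich_intro P q h p :
  globular D q -> globular D p -> P h -> cod p = dom h -> cod h = dom q ->
  sandwich P (comp q (comp h p)).
Proof. intros; exists q, h, p; repeat (split; [assumption|]); reflexivity. Qed.

Lemma sandwich_base P x : P x -> sandwich P x.
Proof.
  intro Hx.
  replace x with (comp (idm (cod x)) (comp x (idm (dom x)))) at 1
    by now rewrite comp_idr, comp_idl.
  apply sandwich_intro; auto using globular_idm; now rewrite ?cod_idm, ?dom_idm.
Qed.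

Lemma sandwich_bind P Q x :
  sandwich P x -> (forall y, P y -> sandwich Q y) -> sandwich Q x.
Proof.
  intros (q & y & p & Hq & Hp & Hy & e1 & e2 & ->) HPQ.
  destruct (HPQ y Hy) as (q' & h & p' & Hq' & Hp' & Hh & e1' & e2' & ->).
  assert (f1 : cod p = dom p') by (revert e1; solve_composable).
  assert (f2 : cod q' = dom q) by (revert e2; solve_composable).
  rewrite <- (comp_assoc _ q' (comp h p') p), <- (comp_assoc _ h p' p),
    (comp_assoc _ q q') by solve_composable.
  apply sandwich_intro; auto using globular_comp; solve_composable.
Qed.

Lemma sandwich_mono P Q x :
  sandwich P x -> (forall y, P y -> Q y) -> sandwich Q x.
Proof. intros Hx HPQ; apply (sandwich_bind P); auto using sandwich_base. Qed.

Lemma sandwich_closed Q x :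
  (forall g, globular D g -> Q g) ->
  (forall g f, cod f = dom g -> Q f -> Q g -> Q (comp g f)) ->
  sandwich Q x -> Q x.
Proof.
  intros Hglob Hcomp (q & h & p & Hq & Hp & Hh & e1 & e2 & ->).
  apply Hcomp; [solve_composable | apply Hcomp | apply Hglob]; auto.
Qed.

Lemma sandwich_hcm P a b :
  (forall a b, fmor Tf a = fmor Sf b -> P a -> P b -> P (hcm a b)) ->
  sandwich P a -> sandwich P b -> fmor Tf a = fmor Sf b -> sandwich P (hcm a b).
Proof.
  intros HP (q & h & p & Hq & Hp & Hh & e1 & e2 & ->)
            (q' & h' & p' & Hq' & Hp' & Hh' & e1' & e2' & ->) E.
  pose proof Hq as [Hq1 Hq2]; pose proof Hp as [Hp1 Hp2].
  pose proof Hq' as [Hq1' Hq2']; pose proof Hp' as [Hp1' Hp2'].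
  rewrite (fmor_comp_identity_l Tf q), (fmor_comp_identity_r Tf h p),
    (fmor_comp_identity_l Sf q'), (fmor_comp_identity_r Sf h' p') in E
    by solve_composable.
  assert (Eq : fmor Tf q = fmor Sf q').
  { apply is_identity_eq; auto. rewrite !fdom, <- e2, <- e2', <- !fcod, E; reflexivity. }
  assert (Ep : fmor Tf p = fmor Sf p').
  { apply is_identity_eq; auto.
    rewrite (is_identity_dom_cod _ _ Hp2), (is_identity_dom_cod _ _ Hp1'), !fcod,
      e1, e1', <- !fdom, E; reflexivity. }
  assert (Ehp : fmor Tf (comp h p) = fmor Sf (comp h' p'))
    by (rewrite !fmor_comp_identity_r; auto).
  rewrite hcm_comp, (hcm_comp _ p h p' h') by (auto; solve_composable).
  apply sandwich_intro; auto using globular_hcm;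
    rewrite hcm_cod, hcm_dom by auto; congruence.
Qed.

Lemma sandwich_globular_iso_conj P X Y u u' :
  globular D u -> is_iso (C1 D) u -> globular D u' -> P Y ->
  comp X u = comp u' Y -> cod u = dom X -> cod Y = dom u' -> sandwich P X.
Proof.
  intros Hu (g & e1 & e2 & e3 & e4) Hu' HY E f1 f2.
  assert (EY : dom u = dom Y).
  { rewrite <- (dom_comp _ X u f1), E; solve_composable. }
  rewrite (comp_section_transpose _ X u _ g E f1) by congruence.
  rewrite <- comp_assoc by congruence.
  apply sandwich_intro; eauto using globular_left_inverse; congruence.
Qed.

End Sandwich.

Lemma gen_least (A : Cat) (P Q : mor A -> Prop) :
  (forall f, P f -> Q f) -> (forall a, Q (idm a)) ->
  (forall g f, cod f = dom g -> Q f -> Q g -> Q (comp g f)) ->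
  forall f, gen A P f -> Q f.
Proof. intros HP Hid Hcomp f Hf; induction Hf; auto. Qed.

Lemma gen_fmor {A B : Cat} (F : Functor A B) (P : mor A -> Prop) (Q : mor B -> Prop) :
  (forall f, P f -> gen B Q (fmor F f)) -> forall f, gen A P f -> gen B Q (fmor F f).
Proof.
  intros HPQ f Hf; induction Hf as [f Hf | a | g f e _ IHf _ IHg]; auto.
  - rewrite fidm; apply gen_id.
  - rewrite fcomp_ax by exact e; apply gen_comp; auto.
    now rewrite fcod, fdom, e.
Qed.

Lemma Vn_SS (C : DblCat) k : Vn C (S (S k)) = gen (C1 C) (hcl C (Vn C (S k))).
Proof. reflexivity. Qed.

Lemma Vn_globular (C : DblCat) n a : globular C a -> Vn C n a.
Proof.
  intro Ha; induction n as [|[|k] IH].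
  - apply gen_base; now left.
  - apply gen_base; now left.
  - rewrite Vn_SS; apply gen_base, hcl_base, IH.
Qed.

Section DoubleFunctor.
Variables (C D : DblCat) (F : DFun C D).
Hypothesis F_dfun : IsDblFunctor F.

Lemma dfun_hcm_compatible a b :
  fmor Tf a = fmor Sf b -> fmor Tf (fmor (F1 F) a) = fmor Sf (fmor (F1 F) b).
Proof. intro e; rewrite (dT_mor F F_dfun), (dS_mor F F_dfun); congruence. Qed.

Lemma fmor_U_sandwich v :
  sandwich D (fun y => exists w, y = fmor Uf w) (fmor (F1 F) (fmor Uf v)).
Proof.
  apply (sandwich_globular_iso_conj D _ _ (fmor Uf (fmor (F0 F) v))
           (phiU F (dom v)) (phiU F (cod v))).
  - apply (phiU_glob F F_dfun).
  - apply (phiU_iso F F_dfun).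
  - apply (phiU_glob F F_dfun).
  - eauto.
  - apply (phiU_nat F F_dfun).
  - now rewrite (phiU_cod F F_dfun), !fdom.
  - now rewrite (phiU_dom F F_dfun), !fcod.
Qed.

Lemma fmor_hcm_sandwich a b : fmor Tf a = fmor Sf b ->
  sandwich D (fun y => y = hcm (fmor (F1 F) a) (fmor (F1 F) b)) (fmor (F1 F) (hcm a b)).
Proof.
  intro e.
  assert (ed : fob Tf (dom a) = fob Sf (dom b)) by (rewrite <- !fdom; congruence).
  assert (ec : fob Tf (cod a) = fob Sf (cod b)) by (rewrite <- !fcod; congruence).
  pose proof (dfun_hcm_compatible a b e) as eF.
  apply (sandwich_globular_iso_conj D _ _ (hcm (fmor (F1 F) a) (fmor (F1 F) b))
           (phi F (dom a) (dom b)) (phi F (cod a) (cod b))).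
  - now apply (phi_glob F F_dfun).
  - now apply (phi_iso F F_dfun).
  - now apply (phi_glob F F_dfun).
  - reflexivity.
  - now apply (phi_nat F F_dfun).
  - rewrite (phi_cod F F_dfun), fdom, hcm_dom by assumption; reflexivity.
  - rewrite (phi_dom F F_dfun), hcm_cod, !fcod by assumption; reflexivity.
Qed.

Lemma gam_fmor a : gam C a -> gam D (fmor (F1 F) a).
Proof.
  assert (gam_sandwich : forall x, sandwich D (gam D) x -> gam D x)
    by (intro x; apply sandwich_closed; auto using gam_glob, gam_vcomp).
  induction 1 as [a Ha | v | x | b a e _ IHa _ IHb | a b e _ IHa _ IHb].
  - apply gam_glob; now apply globular_fmor.
  - apply gam_sandwich, (sandwich_mono D _ _ _ (fmor_U_sandwich v)).
    intros y [w ->]; apply gam_U.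
  - rewrite fidm; apply gam_id.
  - rewrite fcomp_ax by exact e; apply gam_vcomp; auto.
    now rewrite fcod, fdom, e.
  - apply gam_sandwich, (sandwich_mono D _ _ _ (fmor_hcm_sandwich a b e)).
    intros y ->; apply gam_hcomp; auto using dfun_hcm_compatible.
Qed.

Lemma gen_H1_fmor a : gen (C1 C) (H1 C) a -> gen (C1 D) (H1 D) (fmor (F1 F) a).
Proof.
  apply gen_fmor; intros f [Hf | [v ->]].
  - apply gen_base; left; now apply globular_fmor.
  - apply sandwich_closed;
      [intros g Hg; apply gen_base; now left | exact (gen_comp _ _) |].
    apply (sandwich_mono D _ _ _ (fmor_U_sandwich v)).
    intros y Hy; apply gen_base; now right.
Qed.

Lemma hcl_fmor_sandwich (P : mor (C1 C) -> Prop) (Q : mor (C1 D) -> Prop) a :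
  (forall a, P a -> Q (fmor (F1 F) a)) ->
  hcl C P a -> sandwich D (hcl D Q) (fmor (F1 F) a).
Proof.
  intros HPQ Ha; induction Ha as [a Ha | a b e _ IHa _ IHb].
  - apply sandwich_base, hcl_base; auto.
  - apply (sandwich_bind D _ _ _ (fmor_hcm_sandwich a b e)).
    intros y ->; apply sandwich_hcm; auto using dfun_hcm_compatible.
    intros; now apply hcl_comp.
Qed.

Lemma Vn_fmor n a : Vn C n a -> Vn D n (fmor (F1 F) a).
Proof.
  revert a; induction n as [|[|k] IH]; [exact gen_H1_fmor | exact gen_H1_fmor |].
  rewrite !Vn_SS; apply gen_fmor; intros f Hf.
  apply sandwich_closed;
    [intros g Hg; apply gen_base, hcl_base, Vn_globular, Hg | exact (gen_comp _ _) |].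
  apply (sandwich_mono D _ _ _ (hcl_fmor_sandwich _ _ f IH Hf)).
  intros y Hy; now apply gen_base.
Qed.

End DoubleFunctor.

Lemma Vn_succ (C : DblCat) n a : 1 <= n -> Vn C n a -> Vn C (S n) a.
Proof.
  intros Hn Ha; destruct n as [|k]; [lia|].
  rewrite Vn_SS; apply gen_base, hcl_base, Ha.
Qed.

Lemma Vn_mono (C : DblCat) m n a : 1 <= m -> m <= n -> Vn C m a -> Vn C n a.
Proof. intros Hm Hmn; induction Hmn; auto; intro Ha; apply Vn_succ; auto; lia. Qed.

Lemma Vn_max_l (C : DblCat) n m a : 1 <= n -> Vn C n a -> Vn C (max n m) a.
Proof. intro Hn; apply Vn_mono; lia. Qed.

Lemma Vn_max_r (C : DblCat) n m a : 1 <= m -> Vn C m a -> Vn C (max n m) a.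
Proof. intro Hm; apply Vn_mono; lia. Qed.

Lemma Vn_gam (C : DblCat) n a : Vn C n a -> gam C a.
Proof.
  assert (H1_gam : forall f, H1 C f -> gam C f)
    by (intros f [Hf | [v ->]]; auto using gam_glob, gam_U).
  revert a; induction n as [|[|k] IH]; apply gen_least; auto using gam_id, gam_vcomp.
  intros f Hf; induction Hf; auto using gam_hcomp.
Qed.

Lemma gam_Vn (C : DblCat) a : gam C a -> exists n, 1 <= n /\ Vn C n a.
Proof.
  induction 1 as [a Ha | v | x | b a e _ [n [Hn Ha]] _ [m [Hm Hb]]
                 | a b e _ [n [Hn Ha]] _ [m [Hm Hb]]].
  - exists 1; split; auto; apply gen_base; now left.
  - exists 1; split; auto; apply gen_base; right; eauto.
  - exists 1; split; auto; apply gen_id.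
  - exists (max n m); split; [lia|].
    apply Vn_comp; auto using Vn_max_l, Vn_max_r.
  - exists (S (S (max n m))); split; [lia|].
    rewrite Vn_SS; apply gen_base, hcl_comp; auto; apply hcl_base;
      apply Vn_succ; auto using Vn_max_l, Vn_max_r; lia.
Qed.

Lemma Sg_comp_val (C : DblCat) (g f : mor (Sg C)) :
  cod (proj1_sig f) = dom (proj1_sig g) ->
  proj1_sig (comp g f) = comp (proj1_sig g) (proj1_sig f).
Proof. apply sub_comp_eq. Qed.

Lemma SV_comp_val (C : DblCat) n (g f : mor (SV C n)) :
  cod (proj1_sig f) = dom (proj1_sig g) ->
  proj1_sig (comp g f) = comp (proj1_sig g) (proj1_sig f).
Proof. apply sub_comp_eq. Qed.

Section Colimit.
Variables (G : DblToCat) (lam : forall n C, Functor (SV C n) (Gob G C)).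
Hypothesis lam_cocone : Cocone G lam.

Lemma cocone_fob n C x : 1 <= n -> fob (lam n C) x = fob (lam 1 C) x.
Proof. intro Hn; symmetry; apply (proj2 lam_cocone 1 n); auto. Qed.

Lemma cocone_fmor_irrel n m C a (h : Vn C n a) (h' : Vn C m a) :
  1 <= n -> 1 <= m -> fmor (lam n C) (exist _ a h) = fmor (lam m C) (exist _ a h').
Proof.
  intros Hn Hm; pose proof (proj2 lam_cocone) as Hinc.
  pose proof (Vn_max_l C n m a Hn h) as hnm.
  transitivity (fmor (lam (max n m) C) (exist _ a hnm)).
  - apply (Hinc n (max n m)); auto; lia.
  - symmetry; apply (Hinc m (max n m)); auto; lia.
Qed.

(* Any level containing the 2-morphism will do, by [cocone_fmor_irrel]. *)
Definition colim_fmor C (f : mor (Sg C)) : mor (Gob G C) :=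
  let (n, hn) := constructive_indefinite_description _ (gam_Vn C _ (proj2_sig f)) in
  fmor (lam n C) (exist _ (proj1_sig f) (proj2 hn)).

Lemma colim_fmor_spec C f n (hv : Vn C n (proj1_sig f)) :
  1 <= n -> colim_fmor C f = fmor (lam n C) (exist _ (proj1_sig f) hv).
Proof.
  intro Hn; unfold colim_fmor.
  destruct constructive_indefinite_description as [k [Hk Hv]].
  now apply cocone_fmor_irrel.
Qed.

Definition colim C : Functor (Sg C) (Gob G C).
Proof.
  refine (mkFunctor (Sg C) (Gob G C) (fob (lam 1 C)) (colim_fmor C) _ _ _ _).
  - intro f; destruct (gam_Vn C _ (proj2_sig f)) as (n & Hn & Hv).
    rewrite (colim_fmor_spec C f n Hv Hn), fdom; now apply cocone_fob.
  - intro f; destruct (gam_Vn C _ (proj2_sig f)) as (n & Hn & Hv).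
    rewrite (colim_fmor_spec C f n Hv Hn), fcod; now apply cocone_fob.
  - intro x; rewrite (colim_fmor_spec C (@idm (Sg C) x) 1 (Vn_id C 1 x)) by auto.
    exact (fidm _ _ (lam 1 C) x).
  - intros g f e.
    destruct (gam_Vn C _ (proj2_sig f)) as (n & Hn & Hf).
    destruct (gam_Vn C _ (proj2_sig g)) as (m & Hm & Hg).
    pose proof (Vn_max_l C n m _ Hn Hf) as Hf'.
    pose proof (Vn_max_r C n m _ Hm Hg) as Hg'.
    assert (Hgf : Vn C (max n m) (proj1_sig (comp g f)))
      by (rewrite Sg_comp_val by exact e; now apply Vn_comp).
    rewrite (colim_fmor_spec C _ _ Hgf), (colim_fmor_spec C g _ Hg'),
      (colim_fmor_spec C f _ Hf'), <- fcomp_ax by (exact e || lia).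
    f_equal; apply sub_eq.
    rewrite SV_comp_val by exact e; simpl; now apply Sg_comp_val.
Defined.

Lemma colim_natural : NatG G colim.
Proof.
  intros C D F HF; split.
  - apply (proj1 lam_cocone 1); auto.
  - intros a h h'; destruct (gam_Vn C a h) as (n & Hn & Hv); simpl.
    rewrite (colim_fmor_spec C (exist _ a h) n Hv Hn),
      (colim_fmor_spec D (exist _ _ h') n (Vn_fmor C D F HF n a Hv) Hn).
    now apply (proj1 lam_cocone n Hn).
Qed.

Lemma colim_factors : Factors G lam colim.
Proof.
  intros n Hn C; split.
  - intro x; symmetry; now apply cocone_fob.
  - intros a h h'; exact (colim_fmor_spec C (exist _ a h') n h Hn).
Qed.

Lemma colim_unique (mu : forall C, Functor (Sg C) (Gob G C)) :
  Factors G lam mu -> forall C, feq (mu C) (colim C).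
Proof.
  intros Hmu C; split.
  - apply (proj1 (Hmu 1 (le_n 1) C)).
  - intros [a h]; destruct (gam_Vn C a h) as (n & Hn & Hv); simpl.
    rewrite (colim_fmor_spec C (exist _ a h) n Hv Hn).
    apply (proj2 (Hmu n Hn C)).
Qed.

End Colimit.

Theorem proposition5p2 :
  (* gamma_1 and V_n gamma are well defined on double functors *)
  (forall (C D : DblCat) (F : DFun C D), IsDblFunctor F ->
     forall a, gam C a -> gam D (fmor (F1 F) a)) /\
  (forall n, 1 <= n -> forall (C D : DblCat) (F : DFun C D), IsDblFunctor F ->
     forall a, Vn C n a -> Vn D n (fmor (F1 F) a)) /\
  (* the inclusions eta_{m,n} and iota_n are well defined *)
  (forall m n, 1 <= m -> m <= n -> forall (C : DblCat) a, Vn C m a -> Vn C n a) /\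
  (forall n, 1 <= n -> forall (C : DblCat) a, Vn C n a -> gam C a) /\
  (* universal property of the colimit, with cocone the inclusions iota_n *)
  (forall (G : DblToCat) (lam : forall n C, Functor (SV C n) (Gob G C)),
     Cocone G lam ->
     exists mu : forall C, Functor (Sg C) (Gob G C),
       NatG G mu /\ Factors G lam mu /\
       forall mu' : forall C, Functor (Sg C) (Gob G C),
         NatG G mu' -> Factors G lam mu' -> forall C, feq (mu' C) (mu C)).
Proof.
  split; [exact gam_fmor|].
  split; [intros n _ C D F HF; exact (Vn_fmor C D F HF n)|].
  split; [intros m n Hm Hmn C a; now apply Vn_mono|].
  split; [intros n _ C; exact (Vn_gam C n)|].
  intros G lam Hlam; exists (colim G lam Hlam).
  split; [apply colim_natural|].
  split; [apply colim_factors|].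
  intros mu _; apply colim_unique.
Qed.
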